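(* Let $\mathcal F,\mathcal H,\mathcal G$ be lattice filters of an MV-algebra $\mathcal L$ with $\mathcal F\subseteq\mathcal G$ and $\mathcal H\subseteq\mathcal G$. Then $$\mathcal F\subseteq\mathcal H\sqsubseteq\!\!\to\mathcal G\iff\mathcal H\subseteq\mathcal F\sqsubseteq\!\!\to\mathcal G.$$
   Context: $\mathcal L=(L,\oplus,\lnot,0)$ is an MV-algebra. We write $1=\lnot0$, $x\otimes y=\lnot(\lnot x\oplus\lnot y)$, and $x\to y=\lnot x\oplus y$, and use the usual lattice order. A lattice filter is a nonempty upward-closed subset closed under $\wedge$. For an upward-closed set $\mathcal F$ and $a\in L$, let $\mathcal F_a=\{z: z\to a\notin\mathcal F\}$. For $\mathcal F\subseteq\mathcal G$ we put $\mathcal F\sqsubseteq\!\!\to\mathcal G=\bigcap_{a\in L\setminus\mathcal G}\mathcal F_a$. *)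

Record MVAlgebra := {
  mv_car :> Type;
  mv_oplus : mv_car -> mv_car -> mv_car;
  mv_neg : mv_car -> mv_car;
  mv_zero : mv_car;
  mv_assoc : forall x y z, mv_oplus x (mv_oplus y z) = mv_oplus (mv_oplus x y) z;
  mv_comm : forall x y, mv_oplus x y = mv_oplus y x;
  mv_zero_r : forall x, mv_oplus x mv_zero = x;
  mv_negneg : forall x, mv_neg (mv_neg x) = x;
  mv_one_abs : forall x, mv_oplus x (mv_neg mv_zero) = mv_neg mv_zero;
  mv_luk : forall x y,
    mv_oplus (mv_neg (mv_oplus (mv_neg x) y)) y =
    mv_oplus (mv_neg (mv_oplus (mv_neg y) x)) x
}.

Section MVDefs.
Variable L : MVAlgebra.

Definition mv_one : L := mv_neg L (mv_zero L).
Definition mv_otimes (x y : L) : L :=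
  mv_neg L (mv_oplus L (mv_neg L x) (mv_neg L y)).
Definition mv_impl (x y : L) : L := mv_oplus L (mv_neg L x) y.
Definition mv_le (x y : L) : Prop := mv_impl x y = mv_one.
Definition mv_join (x y : L) : L := mv_oplus L (mv_neg L (mv_oplus L (mv_neg L x) y)) y.
Definition mv_meet (x y : L) : L := mv_neg L (mv_join (mv_neg L x) (mv_neg L y)).

Definition upward_closed (F : L -> Prop) : Prop :=
  forall x y, F x -> mv_le x y -> F y.

Definition lattice_filter (F : L -> Prop) : Prop :=
  (exists x, F x) /\ upward_closed F /\
  (forall x y, F x -> F y -> F (mv_meet x y)).

Definition subset (F G : L -> Prop) : Prop := forall x, F x -> G x.

Definition fib (F : L -> Prop) (a : L) : L -> Prop :=
  fun z => ~ F (mv_impl z a).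

Definition sqimp (F G : L -> Prop) : L -> Prop :=
  fun z => forall a, ~ G a -> fib F a z.

End MVDefs.


(* Unfolding the definitions, F ⊆ (H ⊑→ G) says:
   for every x ∈ F and every a ∉ G, x → a ∉ H.  The condition is thus a
   statement about pairs (x, y) ∈ F × H, which is symmetric once we know
     y ≤ (y → a) → a                                           (double implication)
   in every MV-algebra: if y ∈ H and y → a ∈ F with a ∉ G, then the
   hypothesis applied to x := y → a gives (y → a) → a ∉ H, while upward
   closure of H puts (y → a) → a in H. *)

Section MVIdentities.
Variable L : MVAlgebra.

(* ¬x ⊕ x = 1: instance of MV6 with the first argument equal to 1. *)
Lemma neg_oplus_self (x : L) : mv_oplus L (mv_neg L x) x = mv_one L.
Proof.
  pose proof (mv_luk L (mv_one L) x) as luk.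
  unfold mv_one in *.
  rewrite mv_negneg, mv_one_abs, (mv_comm L (mv_zero L) x), mv_zero_r in luk.
  exact luk.
Qed.

(* y ≤ (y → a) → a: by MV6, (y → a) → a = (a → y) → y, which is ≥ y. *)
Lemma le_double_impl (y a : L) : mv_le L y (mv_impl L (mv_impl L y a) a).
Proof.
  unfold mv_le, mv_impl.
  rewrite mv_luk, (mv_comm L (mv_neg L (mv_oplus L (mv_neg L a) y)) y).
  rewrite mv_assoc, neg_oplus_self.
  unfold mv_one. rewrite mv_comm. apply mv_one_abs.
Qed.

End MVIdentities.

Lemma sqimp_subset_swap (L : MVAlgebra) (F H G : L -> Prop) :
  upward_closed L H ->
  subset L F (sqimp L H G) -> subset L H (sqimp L F G).
Proof.
  intros up_H F_sub y Hy a not_Ga F_ya.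
  apply (F_sub _ F_ya a not_Ga).
  exact (up_H y _ Hy (le_double_impl L y a)).
Qed.

Theorem mainTheorem6 (L : MVAlgebra) (F H G : L -> Prop) :
  lattice_filter L F -> lattice_filter L H -> lattice_filter L G ->
  subset L F G -> subset L H G ->
  (subset L F (sqimp L H G) <-> subset L H (sqimp L F G)).
Proof.
  intros [_ [up_F _]] [_ [up_H _]] _ _ _.
  split; apply sqimp_subset_swap; assumption.
Qed.
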